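(* Let $q$ be a prime. For any integer $W\leqslant q$ and integers $a,h$ with $\gcd(ah,q)=1$ we have $$\sum_{w=1}^{W}\sum_{\substack{x\in\mathbb{F}_q\\ x^2=aw}}\mathbf{e}_q(hx)\ll q^{1/2+o(1)},$$ where $o(1)\to 0$ as $q\to\infty$.
   Context: $\mathbf{e}_q(\xi)=\exp(2\pi i\xi/q)$; $\mathbb{F}_q$ is identified with $\{0,\dots,q-1\}$. The implied constant is absolute. *)

From Stdlib Require Import Reals ZArith List.
From Coquelicot Require Import Coquelicot.
Open Scope R_scope.

Definition eq_char (q : Z) (xi : Z) : C :=
  (cos (2 * PI * IZR xi / IZR q), sin (2 * PI * IZR xi / IZR q)).

Definition Csum (l : list C) : C := fold_right Cplus (RtoC 0) l.

(* F_q identified with {0,...,q-1}; the inner sum over x in F_q with x^2 = a w *)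
Definition inner_sum (q a h w : Z) : C :=
  Csum (map (fun x => eq_char q (h * x))
    (filter (fun x => Z.eqb ((x * x - a * w) mod q) 0)
       (map Z.of_nat (seq 0 (Z.to_nat q))))).

(* sum_{w=1}^{W} (empty if W < 1) *)
Definition S_sum (q W a h : Z) : C :=
  Csum (map (fun w => inner_sum q a h w) (map Z.of_nat (seq 1 (Z.to_nat W)))).

From Stdlib Require Import Reals ZArith List Znumtheory Lia Lra.
From Coquelicot Require Import Coquelicot.
Open Scope R_scope.

(* Choose b with a b = 1 (mod q).  Then x^2 = a w iff w = b x^2, and detecting this congruence
   with additive characters gives
     S = (1/q) sum_t (sum_{w=1}^{W} e_q(t w)) (sum_x e_q(h x - b t x^2)).
   The term t = 0 vanishes since q does not divide h.  For t <> 0 the quadratic Gauss sum has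
   modulus sqrt q (for odd q) and the geometric sum is at most 1/sin(pi t/q) <= q/t + q/(q-t),
   so |S| <= 2 sqrt q (1 + log q); finally log q <= q^eps / eps.  For q = 2 the trivial bound
   suffices. *)

Fixpoint csum (n : nat) (f : nat -> C) : C :=
  match n with O => RtoC 0 | S m => (csum m f + f m)%C end.

Fixpoint rsum (n : nat) (f : nat -> R) : R :=
  match n with O => 0 | S m => rsum m f + f m end.

Lemma csum_ext n f g : (forall i, (i < n)%nat -> f i = g i) -> csum n f = csum n g.
Proof.
  induction n as [|n IH]; intros Hfg; simpl; [reflexivity|].
  rewrite IH by (intros; apply Hfg; lia). now rewrite Hfg by lia.
Qed.

Lemma csum_plus n f g : csum n (fun i => f i + g i)%C = (csum n f + csum n g)%C.
Proof. induction n as [|n IH]; simpl; [|rewrite IH]; ring. Qed.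

Lemma csum_scal n c f : (c * csum n f)%C = csum n (fun i => c * f i)%C.
Proof. induction n as [|n IH]; simpl; [|rewrite <- IH]; ring. Qed.

Lemma csum_const n c : csum n (fun _ => c) = (INR n * c)%C.
Proof. induction n as [|n IH]; simpl csum; [simpl; ring|]. rewrite IH, S_INR, RtoC_plus. ring. Qed.

Lemma csum_first n f : csum (S n) f = (f O + csum n (fun i => f (S i)))%C.
Proof.
  induction n as [|n IH]; [simpl; ring|].
  change (csum (S (S n)) f) with (csum (S n) f + f (S n))%C. rewrite IH. simpl. ring.
Qed.

Lemma csum_shift n f : csum n (fun i => f (S i)) = (csum n f - f O + f n)%C.
Proof. transitivity (csum (S n) f - f O)%C; [rewrite csum_first | simpl]; ring. Qed.

Lemma csum_exchange n m (f : nat -> nat -> C) :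
  csum n (fun i => csum m (fun j => f i j)) = csum m (fun j => csum n (fun i => f i j)).
Proof.
  induction n as [|n IH]; simpl.
  - rewrite csum_const. simpl. ring.
  - now rewrite IH, <- csum_plus.
Qed.

Lemma csum_mul_csum n m f g :
  csum n (fun j => csum m (fun i => f j * g i))%C = (csum n f * csum m g)%C.
Proof.
  induction n as [|n IH]; simpl; [ring|].
  now rewrite IH, <- (csum_scal m (f n)), Cmult_plus_distr_r.
Qed.

Lemma csum_conj n f : Cconj (csum n f) = csum n (fun i => Cconj (f i)).
Proof.
  induction n as [|n IH]; simpl; [|now rewrite Cplus_conj, IH].
  apply injective_projections; simpl; lra.
Qed.

Lemma Cmod_csum n f : Cmod (csum n f) <= rsum n (fun i => Cmod (f i)).
Proof.
  induction n as [|n IH]; simpl; [rewrite Cmod_0; lra|].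
  eapply Rle_trans; [apply Cmod_triangle|lra].
Qed.

Lemma rsum_ext n f g : (forall i, (i < n)%nat -> f i = g i) -> rsum n f = rsum n g.
Proof.
  induction n as [|n IH]; intros Hfg; simpl; [reflexivity|].
  rewrite IH by (intros; apply Hfg; lia). now rewrite Hfg by lia.
Qed.

Lemma rsum_le n f g : (forall i, (i < n)%nat -> f i <= g i) -> rsum n f <= rsum n g.
Proof.
  induction n as [|n IH]; intros Hfg; simpl; [lra|].
  apply Rplus_le_compat; [apply IH; intros; apply Hfg; lia | apply Hfg; lia].
Qed.

Lemma rsum_plus n f g : rsum n (fun i => f i + g i) = rsum n f + rsum n g.
Proof. induction n as [|n IH]; simpl; [|rewrite IH]; ring. Qed.

Lemma rsum_scal n c f : c * rsum n f = rsum n (fun i => c * f i).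
Proof. induction n as [|n IH]; simpl; [|rewrite <- IH]; ring. Qed.

Lemma rsum_const n c : rsum n (fun _ => c) = INR n * c.
Proof. induction n as [|n IH]; simpl rsum; [simpl; ring|]. rewrite IH, S_INR. ring. Qed.

Lemma rsum_first n f : rsum (S n) f = f O + rsum n (fun i => f (S i)).
Proof.
  induction n as [|n IH]; [simpl; ring|].
  change (rsum (S (S n)) f) with (rsum (S n) f + f (S n)). rewrite IH. simpl. ring.
Qed.

Lemma rsum_rev n f : rsum n f = rsum n (fun i => f (n - 1 - i)%nat).
Proof.
  revert f; induction n as [|n IH]; intros f; [reflexivity|].
  change (rsum (S n) f) with (rsum n f + f n).
  rewrite (rsum_first n), IH, Rplus_comm.
  replace (S n - 1 - 0)%nat with n by lia.
  f_equal. apply rsum_ext. intros i _. f_equal. lia.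
Qed.

Definition sum_Fq (q : Z) (f : Z -> C) : C := csum (Z.to_nat q) (fun i => f (Z.of_nat i)).

Definition quad_sum (q h c : Z) : C := sum_Fq q (fun x => eq_char q (h * x + c * (x * x))).

Definition geom_sum (q t : Z) (W : nat) : C := csum W (fun j => eq_char q (t * Z.of_nat (S j))).

Section AdditiveCharacter.

Variable q : Z.
Hypothesis q_pos : (0 < q)%Z.

Let IZR_q_neq0 : IZR q <> 0.
Proof. apply not_0_IZR. lia. Qed.

Lemma eq_char_add m n : eq_char q (m + n) = (eq_char q m * eq_char q n)%C.
Proof.
  unfold eq_char. rewrite plus_IZR.
  replace (2 * PI * (IZR m + IZR n) / IZR q)
    with (2 * PI * IZR m / IZR q + 2 * PI * IZR n / IZR q) by (field; auto).
  apply injective_projections; simpl; [rewrite cos_plus | rewrite sin_plus]; ring.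
Qed.

Lemma eq_char_0 : eq_char q 0 = 1.
Proof.
  unfold eq_char. replace (2 * PI * IZR 0 / IZR q) with 0 by (simpl; field; auto).
  now rewrite cos_0, sin_0.
Qed.

Lemma eq_char_mul_q k : eq_char q (q * k) = 1.
Proof.
  assert (Hnat : forall n, eq_char q (q * Z.of_nat n) = 1).
  { intros n. unfold eq_char. rewrite mult_IZR, <- INR_IZR_INZ.
    replace (2 * PI * (IZR q * INR n) / IZR q) with (0 + 2 * INR n * PI) by (field; auto).
    now rewrite cos_period, sin_period, cos_0, sin_0. }
  destruct (Z_le_gt_dec 0 k) as [Hk|Hk].
  - replace k with (Z.of_nat (Z.to_nat k)) by lia. apply Hnat.
  - assert (Hsum := eq_char_add (q * k) (q * Z.of_nat (Z.to_nat (- k)))).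
    replace (q * k + q * Z.of_nat (Z.to_nat (- k)))%Z with 0%Z in Hsum by lia.
    rewrite eq_char_0, Hnat, Cmult_1_r in Hsum. now symmetry.
Qed.

Lemma eq_char_periodic n k : eq_char q (n + q * k) = eq_char q n.
Proof. rewrite eq_char_add, eq_char_mul_q. apply Cmult_1_r. Qed.

Lemma eq_char_mod n : eq_char q n = eq_char q (n mod q).
Proof.
  rewrite (Z.div_mod n q) at 1 by lia.
  rewrite Z.add_comm, Z.mul_comm, <- Z.mul_comm. apply eq_char_periodic.
Qed.

Lemma Cmod_eq_char n : Cmod (eq_char q n) = 1.
Proof.
  unfold Cmod, eq_char; simpl. rewrite !Rmult_1_r, Rplus_comm.
  pose proof (sin2_cos2 (2 * PI * IZR n / IZR q)) as H. unfold Rsqr in H.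
  rewrite H. apply sqrt_1.
Qed.

Lemma Cconj_eq_char n : Cconj (eq_char q n) = eq_char q (- n).
Proof.
  unfold eq_char, Cconj. rewrite opp_IZR. simpl.
  replace (2 * PI * - IZR n / IZR q) with (- (2 * PI * IZR n / IZR q)) by (field; auto).
  now rewrite cos_neg, sin_neg.
Qed.

Lemma Cmod_eq_char_sub1 n : Cmod (eq_char q n - 1) = 2 * Rabs (sin (PI * IZR n / IZR q)).
Proof.
  set (x := PI * IZR n / IZR q).
  replace (2 * Rabs (sin x)) with (Rabs (2 * sin x)) by (rewrite Rabs_mult, Rabs_pos_eq; lra).
  rewrite <- sqrt_Rsqr_abs. unfold Cmod, eq_char. f_equal. simpl.
  replace (2 * PI * IZR n / IZR q) with (2 * x) by (unfold x; field; auto).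
  rewrite cos_2a_sin, sin_2a. pose proof (sin2_cos2 x) as H. unfold Rsqr in *.
  transitivity (4 * (sin x * sin x) * (sin x * sin x + cos x * cos x)); [ring | rewrite H; ring].
Qed.

Lemma sin_frac_pos r : (0 < r < q)%Z -> 0 < sin (PI * IZR r / IZR q).
Proof.
  intros Hr. assert (0 < IZR r < IZR q) by (split; apply IZR_lt; lia).
  assert (Hpi := PI_RGT_0). apply sin_gt_0.
  - apply Rdiv_lt_0_compat; nra.
  - apply Rmult_lt_reg_r with (IZR q); [lra|]. field_simplify; nra.
Qed.

Lemma eq_char_neq1 k : ~ (q | k)%Z -> eq_char q k <> 1.
Proof.
  intros Hk Hone. rewrite eq_char_mod in Hone.
  assert (Hr : (0 < k mod q < q)%Z).
  { pose proof (Z.mod_pos_bound k q q_pos).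
    enough ((k mod q) <> 0)%Z by lia. now rewrite Z.mod_divide by lia. }
  assert (Hmod := Cmod_eq_char_sub1 (k mod q)).
  rewrite Hone in Hmod. replace (1 - 1)%C with (RtoC 0) in Hmod by ring.
  rewrite Cmod_0, Rabs_pos_eq in Hmod by (left; now apply sin_frac_pos).
  pose proof (sin_frac_pos _ Hr). lra.
Qed.

Lemma sum_Fq_shift (f : Z -> C) y :
  (forall x k, f (x + q * k)%Z = f x) -> sum_Fq q (fun x => f (x + y)%Z) = sum_Fq q f.
Proof.
  intros Hper. unfold sum_Fq.
  assert (Hnat : forall n, csum (Z.to_nat q) (fun i => f (Z.of_nat i + Z.of_nat n)%Z)
                           = csum (Z.to_nat q) (fun i => f (Z.of_nat i))).
  { induction n as [|n IH].
    - apply csum_ext. intros. f_equal. lia.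
    - rewrite <- IH. set (g := fun i => f (Z.of_nat i + Z.of_nat n)%Z).
      transitivity (csum (Z.to_nat q) (fun i => g (S i))).
      { apply csum_ext. intros. unfold g. f_equal. lia. }
      (* Shifting by one only moves the x = 0 term to x = q, where periodicity applies. *)
      rewrite csum_shift. unfold g.
      replace (Z.of_nat (Z.to_nat q) + Z.of_nat n)%Z with (Z.of_nat 0 + Z.of_nat n + q * 1)%Z by lia.
      rewrite Hper. ring. }
  rewrite <- (Hnat (Z.to_nat (y mod q))). apply csum_ext. intros i _.
  symmetry. rewrite <- (Hper _ (y / q)%Z). f_equal.
  pose proof (Z.div_mod y q ltac:(lia)). pose proof (Z.mod_pos_bound y q q_pos). lia.
Qed.

Lemma sum_Fq_single (f : Z -> C) :
  (forall x, (0 < x < q)%Z -> f x = 0) -> sum_Fq q f = f 0%Z.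
Proof.
  intros Hf. unfold sum_Fq. replace (Z.to_nat q) with (S (Z.to_nat q - 1)) by lia.
  rewrite csum_first, (csum_ext _ _ (fun _ => RtoC 0)), csum_const by (intros; apply Hf; lia).
  simpl. ring.
Qed.

Lemma sum_Fq_eq_char_div k : (q | k)%Z -> sum_Fq q (fun x => eq_char q (k * x)) = IZR q.
Proof.
  intros [m ->]. unfold sum_Fq.
  rewrite (csum_ext _ _ (fun _ => RtoC 1)), csum_const.
  - rewrite Cmult_1_r. f_equal. rewrite INR_IZR_INZ. f_equal. lia.
  - intros i _. rewrite <- eq_char_mul_q with (m * Z.of_nat i)%Z. f_equal. ring.
Qed.

Lemma sum_Fq_eq_char_ndiv k : ~ (q | k)%Z -> sum_Fq q (fun x => eq_char q (k * x)) = 0.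
Proof.
  intros Hk. set (s := sum_Fq q _).
  assert (Hinv : (s * eq_char q k)%C = s).
  { transitivity (sum_Fq q (fun x => eq_char q (k * (x + 1)))).
    - unfold s, sum_Fq. rewrite Cmult_comm, csum_scal. apply csum_ext. intros.
      rewrite <- eq_char_add. f_equal. ring.
    - apply (sum_Fq_shift (fun x => eq_char q (k * x))). intros x m.
      rewrite <- (eq_char_periodic (k * x) (k * m)). f_equal. ring. }
  assert (Hmul : (s * (eq_char q k - 1))%C = 0)
    by (transitivity (s * eq_char q k - s)%C; [ring | rewrite Hinv; ring]).
  assert (Hne : (eq_char q k - 1)%C <> 0) by (now apply Cminus_eq_contra, eq_char_neq1).
  transitivity (s * (eq_char q k - 1) / (eq_char q k - 1))%C; [field; exact Hne|].
  rewrite Hmul. unfold Cdiv. apply Cmult_0_l.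
Qed.

Lemma Cmod_geom_sum_le t W :
  (0 < t < q)%Z -> Cmod (geom_sum q t W) <= / sin (PI * IZR t / IZR q).
Proof.
  intros Ht. set (g := fun j => eq_char q (t * Z.of_nat (S j))).
  assert (Htel : (geom_sum q t W * (eq_char q t - 1))%C = (g W - g O)%C).
  { assert (Hmul : (geom_sum q t W * eq_char q t)%C = csum W (fun j => g (S j))).
    { unfold geom_sum. rewrite Cmult_comm, csum_scal. apply csum_ext. intros.
      unfold g. rewrite <- eq_char_add. f_equal. lia. }
    rewrite csum_shift in Hmul. unfold geom_sum in Hmul |- *. fold g in Hmul |- *.
    transitivity (csum W g * eq_char q t - csum W g)%C; [ring | rewrite Hmul; ring]. }
  assert (Hsin := sin_frac_pos t Ht).
  assert (Hle : Cmod (geom_sum q t W) * (2 * sin (PI * IZR t / IZR q)) <= 2).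
  { rewrite <- (Rabs_pos_eq (sin _)), <- Cmod_eq_char_sub1, <- Cmod_mult, Htel by lra.
    eapply Rle_trans; [apply Cmod_triangle|]. rewrite Cmod_opp. unfold g. rewrite !Cmod_eq_char. lra. }
  apply Rmult_le_reg_r with (2 * sin (PI * IZR t / IZR q)); [lra|].
  replace (/ sin (PI * IZR t / IZR q) * (2 * sin (PI * IZR t / IZR q))) with 2 by (field; lra).
  exact Hle.
Qed.

End AdditiveCharacter.

Lemma prime_ndiv_mul q m n : prime q -> ~ (q | m)%Z -> ~ (q | n)%Z -> ~ (q | m * n)%Z.
Proof. intros Hq Hm Hn Hmn. now destruct (prime_mult q Hq m n Hmn). Qed.

Lemma ndiv_of_lt q x : (0 < x < q)%Z -> ~ (q | x)%Z.
Proof. intros Hx Hd. apply Z.divide_pos_le in Hd; lia. Qed.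

Lemma Cmod_quad_sum q h c :
  prime q -> q <> 2%Z -> ~ (q | c)%Z -> Cmod (quad_sum q h c) = sqrt (IZR q).
Proof.
  (* |G|^2 = sum_{y,z} e(Q(z + y) - Q(y)) = sum_z e(Q z) sum_y e(2 c z y), and the inner sum
     vanishes unless z = 0 because 2 c is invertible mod q. *)
  intros Hq Hq2 Hc. pose proof (prime_ge_2 q Hq). assert (Hq0 : (0 < q)%Z) by lia.
  set (Q := fun x => (h * x + c * (x * x))%Z).
  set (G := quad_sum q h c).
  assert (Hexpand : (G * Cconj G)%C =
    sum_Fq q (fun y => sum_Fq q (fun x => eq_char q (Q x - Q y)))).
  { unfold G at 2, quad_sum, sum_Fq at 1. rewrite csum_conj, csum_scal.
    apply csum_ext. intros y _. unfold G, quad_sum, sum_Fq.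
    rewrite Cmult_comm, csum_scal. apply csum_ext. intros x _.
    rewrite Cconj_eq_char, <- eq_char_add by exact Hq0. f_equal. unfold Q. ring. }
  assert (Hshift : forall y, sum_Fq q (fun x => eq_char q (Q x - Q y)) =
    sum_Fq q (fun z => eq_char q (Q z) * eq_char q (2 * c * z * y))%C).
  { intros y. rewrite <- (sum_Fq_shift q Hq0 (fun x => eq_char q (Q x - Q y)) y).
    - apply csum_ext. intros z _. rewrite <- eq_char_add by exact Hq0. f_equal. unfold Q. ring.
    - intros x m. rewrite <- (eq_char_periodic q Hq0 (Q x - Q y) (h * m + c * (2 * x * m + q * m * m))).
      f_equal. unfold Q. ring. }
  assert (Hnorm : (G * Cconj G)%C = IZR q).
  { rewrite Hexpand. unfold sum_Fq at 1. rewrite (csum_ext _ _ _ (fun y _ => Hshift _)).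
    unfold sum_Fq. rewrite csum_exchange.
    transitivity (sum_Fq q (fun z => eq_char q (Q z) * sum_Fq q (fun y => eq_char q ((2 * c * z) * y)))%C).
    { apply csum_ext. intros z _. unfold sum_Fq. now rewrite csum_scal. }
    rewrite sum_Fq_single; [| exact Hq0 | intros z Hz].
    2: { rewrite sum_Fq_eq_char_ndiv; [apply Cmult_0_r | exact Hq0 |].
         apply prime_ndiv_mul; [exact Hq | apply prime_ndiv_mul | apply ndiv_of_lt; lia];
           [exact Hq | apply ndiv_of_lt; lia | exact Hc]. }
    rewrite sum_Fq_eq_char_div by (try exact Hq0; exists 0%Z; ring).
    unfold Q. replace (h * 0 + c * (0 * 0))%Z with 0%Z by ring.
    rewrite eq_char_0 by exact Hq0. ring. }
  assert (Hsq : Cmod G ^ 2 = IZR q)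
    by (apply (f_equal fst) in Hnorm; rewrite <- Cmod2_conj in Hnorm; exact Hnorm).
  rewrite <- Hsq, sqrt_pow2 by apply Cmod_ge_0. reflexivity.
Qed.

Lemma sin_ge_frac u : 0 < u <= 1/2 -> u <= sin (PI * u).
Proof.
  (* sin x >= x - x^3/6 >= x/3 on [0, 2], and pi > 3. *)
  intros Hu. pose proof PI2_3_2. pose proof PI_4. set (x := PI * u).
  assert (Hx : 3 * u <= x <= 2) by (unfold x; nra).
  assert (Htaylor : x - x ^ 3 / 6 <= sin x).
  { destruct (sin_bound x 0 ltac:(lra) ltac:(nra)) as [Hlb _].
    unfold sin_approx, sin_term in Hlb. simpl in Hlb. lra. }
  nra.
Qed.

Lemma inv_sin_le t x : 0 < t < x -> / sin (PI * t / x) <= x / t + x / (x - t).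
Proof.
  intros Ht. assert (0 < x / t) by (apply Rdiv_lt_0_compat; lra).
  assert (0 < x / (x - t)) by (apply Rdiv_lt_0_compat; lra).
  destruct (Rle_lt_dec (2 * t) x) as [Hsmall|Hlarge].
  - assert (Hsin := sin_ge_frac (t / x)).
    replace (PI * (t / x)) with (PI * t / x) in Hsin by (field; lra).
    assert (0 < t / x <= 1/2) by (split; [apply Rdiv_lt_0_compat | apply Rmult_le_reg_r with x; field_simplify]; lra).
    eapply Rle_trans; [apply Rinv_le_contravar; [|apply Hsin]; lra|]. rewrite Rinv_div. lra.
  - assert (Hsin := sin_ge_frac ((x - t) / x)).
    replace (PI * ((x - t) / x)) with (PI - PI * t / x) in Hsin by (field; lra).
    rewrite sin_PI_x in Hsin.
    assert (0 < (x - t) / x <= 1/2) by (split; [apply Rdiv_lt_0_compat | apply Rmult_le_reg_r with x; field_simplify]; lra).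
    eapply Rle_trans; [apply Rinv_le_contravar; [|apply Hsin]; lra|]. rewrite Rinv_div. lra.
Qed.

Lemma rsum_harmonic_le m : (1 <= m)%nat -> rsum m (fun i => / INR (S i)) <= 1 + ln (INR m).
Proof.
  induction m as [|m IH]; intros Hm; [lia|]. destruct m as [|m].
  - simpl. rewrite ln_1. lra.
  - change (rsum (S (S m)) _) with (rsum (S m) (fun i => / INR (S i)) + / INR (S (S m))).
    assert (Hpos : 0 < INR (S m)) by (apply lt_0_INR; lia).
    rewrite (S_INR (S m)) in *.
    (* 1 + y <= exp y at y = log (m / (m + 1)) gives 1 / (m + 1) <= log (m + 1) - log m. *)
    assert (Hstep := exp_ineq1_le (ln (INR (S m) / (INR (S m) + 1)))).
    rewrite exp_ln, ln_div in Hstep by (try apply Rdiv_lt_0_compat; lra).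
    replace (INR (S m) / (INR (S m) + 1)) with (1 - / (INR (S m) + 1)) in Hstep by (field; lra).
    specialize (IH ltac:(lia)). lra.
Qed.

Lemma rsum_inv_sin_le n : (2 <= n)%nat ->
  rsum (n - 1) (fun t => / sin (PI * INR (S t) / INR n)) <= 2 * INR n * (1 + ln (INR n)).
Proof.
  intros Hn. assert (Hpos : 0 < INR n) by (apply lt_0_INR; lia).
  eapply Rle_trans.
  { apply (rsum_le _ _ (fun t => INR n * / INR (S t) + INR n * / INR (S (n - 1 - 1 - t)))).
    intros t Ht. eapply Rle_trans; [apply inv_sin_le|].
    - split; [apply lt_0_INR; lia | apply lt_INR; lia].
    - replace (INR n - INR (S t)) with (INR (S (n - 1 - 1 - t))) by (rewrite <- minus_INR by lia; f_equal; lia).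
      right. reflexivity. }
  rewrite rsum_plus, <- !rsum_scal, <- (rsum_rev (n - 1) (fun i => / INR (S i))).
  assert (Hharm := rsum_harmonic_le (n - 1) ltac:(lia)).
  assert (Hln : ln (INR (n - 1)) <= ln (INR n)) by (apply ln_le; [apply lt_0_INR; lia | apply le_INR; lia]).
  nra.
Qed.

Lemma ln_le_Rpower x eps : 1 <= x -> 0 < eps -> ln x <= Rpower x eps / eps.
Proof.
  intros Hx Heps. assert (Hexp := exp_ineq1_le (eps * ln x)). unfold Rpower.
  assert (0 <= ln x) by (rewrite <- ln_1; apply ln_le; lra).
  apply Rmult_le_reg_r with eps; [exact Heps|]. field_simplify; lra.
Qed.

Lemma sqrt_mul_log_le_Rpower x eps : 1 <= x -> 0 < eps ->
  sqrt x * (1 + ln x) <= (1 + / eps) * Rpower x (1/2 + eps).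
Proof.
  intros Hx Heps.
  rewrite Rpower_plus, <- Rpower_sqrt by lra. replace (1/2) with (/ 2) by field.
  assert (Hln := ln_le_Rpower x eps Hx Heps).
  assert (1 <= Rpower x eps) by (rewrite <- (Rpower_O x) by lra; apply Rle_Rpower; lra).
  assert (0 < Rpower x (/ 2)) by apply exp_pos.
  assert (0 < / eps) by (apply Rinv_0_lt_compat; lra).
  unfold Rdiv in Hln. nra.
Qed.

Lemma Csum_map_seq (g : Z -> C) s n :
  Csum (map g (map Z.of_nat (seq s n))) = csum n (fun i => g (Z.of_nat (s + i))).
Proof.
  unfold Csum. revert s; induction n as [|n IH]; intros s; [reflexivity|].
  rewrite csum_first. simpl. rewrite IH, Nat.add_0_r. f_equal.
  apply csum_ext. intros i _. do 2 f_equal. lia.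
Qed.

Lemma Csum_map_filter (g : Z -> C) p l :
  Csum (map g (filter p l)) = Csum (map (fun x => if p x then g x else 0) l).
Proof. induction l as [|x l IH]; simpl; [|destruct (p x); simpl; rewrite IH]; ring. Qed.

Lemma S_sum_as_csum q W a h :
  S_sum q W a h = csum (Z.to_nat W) (fun j => sum_Fq q (fun x =>
    if ((x * x - a * Z.of_nat (S j)) mod q =? 0)%Z then eq_char q (h * x) else 0)).
Proof.
  unfold S_sum, inner_sum. rewrite Csum_map_seq. apply csum_ext. intros j _.
  now rewrite Csum_map_filter, Csum_map_seq.
Qed.

Lemma square_congr_iff q a b x w :
  (q | a * b - 1)%Z -> (q | x * x - a * w)%Z <-> (q | w - b * (x * x))%Z.
Proof.
  intros [k Hk]. split; intros [m Hm].
  - exists (- b * m - k * w)%Z.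
    replace (w - b * (x * x))%Z with (- b * (x * x - a * w) - (a * b - 1) * w)%Z by ring.
    rewrite Hm, Hk. ring.
  - exists (- a * m - k * x * x)%Z.
    replace (x * x - a * w)%Z with (- a * (w - b * (x * x)) - (a * b - 1) * (x * x))%Z by ring.
    rewrite Hm, Hk. ring.
Qed.

Lemma square_indicator_as_char_sum q a b h x w : (0 < q)%Z -> (q | a * b - 1)%Z ->
  (if ((x * x - a * w) mod q =? 0)%Z then eq_char q (h * x) else 0) =
  (/ IZR q * sum_Fq q (fun t => eq_char q (t * w) * eq_char q (h * x + - (b * t) * (x * x))))%C.
Proof.
  intros Hq0 Hab.
  assert (HqC : RtoC (IZR q) <> 0) by
    (intros H; apply RtoC_inj in H; exact (not_0_IZR q ltac:(lia) H)).
  assert (Hsum : sum_Fq q (fun t => eq_char q (t * w) * eq_char q (h * x + - (b * t) * (x * x)))%C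
               = (eq_char q (h * x) * sum_Fq q (fun t => eq_char q ((w - b * (x * x)) * t)))%C).
  { unfold sum_Fq. rewrite csum_scal. apply csum_ext. intros t _.
    rewrite <- !eq_char_add by exact Hq0. f_equal. ring. }
  rewrite Hsum.
  destruct (Z.eqb_spec ((x * x - a * w) mod q) 0) as [Hdiv|Hndiv];
    rewrite Z.mod_divide in * by lia.
  - rewrite sum_Fq_eq_char_div by (try exact Hq0; now apply (square_congr_iff q a)).
    field. exact HqC.
  - rewrite sum_Fq_eq_char_ndiv by (try exact Hq0; now rewrite <- (square_congr_iff q a)). ring.
Qed.

Lemma S_sum_as_geom_quad q W a h b : (0 < q)%Z -> (q | a * b - 1)%Z ->
  S_sum q W a h =
  (/ IZR q * sum_Fq q (fun t => geom_sum q t (Z.to_nat W) * quad_sum q h (- (b * t))))%C.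
Proof.
  intros Hq0 Hab. rewrite S_sum_as_csum.
  set (term := fun j x t => (eq_char q (t * Z.of_nat (S j)) * eq_char q (h * x + - (b * t) * (x * x)))%C).
  transitivity (/ IZR q * csum (Z.to_nat W) (fun j => sum_Fq q (fun x => sum_Fq q (term j x))))%C.
  { rewrite csum_scal. apply csum_ext. intros j _. unfold sum_Fq at 1 2. rewrite csum_scal.
    apply csum_ext. intros x _. now apply square_indicator_as_char_sum. }
  f_equal. unfold sum_Fq.
  rewrite (csum_ext _ _ _ (fun j _ => csum_exchange _ _ (fun x t => term j (Z.of_nat x) (Z.of_nat t)))).
  rewrite csum_exchange. apply csum_ext. intros t _. apply csum_mul_csum.
Qed.

Lemma quad_sum_0 q h : (0 < q)%Z -> ~ (q | h)%Z -> quad_sum q h 0 = 0.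
Proof.
  intros Hq0 Hh. rewrite <- (sum_Fq_eq_char_ndiv q Hq0 h Hh).
  apply csum_ext. intros x _. f_equal. ring.
Qed.

Lemma Cmod_S_sum_le_odd q W a h b :
  prime q -> q <> 2%Z -> (q | a * b - 1)%Z -> ~ (q | h)%Z ->
  Cmod (S_sum q W a h) <= 2 * sqrt (IZR q) * (1 + ln (IZR q)).
Proof.
  intros Hq Hq2 Hab Hh. pose proof (prime_ge_2 q Hq). assert (Hq0 : (0 < q)%Z) by lia.
  assert (HqR : INR (Z.to_nat q) = IZR q) by (rewrite INR_IZR_INZ; f_equal; lia).
  assert (Hqpos : 0 < IZR q) by (apply IZR_lt; lia).
  assert (Hinv : 0 < / IZR q) by (apply Rinv_0_lt_compat; lra).
  assert (HqC : RtoC (IZR q) <> 0) by (intros HC; apply RtoC_inj in HC; lra).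
  assert (Hb : ~ (q | b)%Z).
  { intros Hqb. apply (ndiv_of_lt q 1); [lia|].
    replace 1%Z with (a * b - (a * b - 1))%Z by ring.
    apply Z.divide_sub_r; [apply Z.divide_mul_r|]; assumption. }
  rewrite (S_sum_as_geom_quad q W a h b Hq0 Hab), Cmod_mult, Cmod_inv, Cmod_R, Rabs_pos_eq
    by (assumption || lra).
  unfold sum_Fq. eapply Rle_trans; [apply Rmult_le_compat_l; [lra | apply Cmod_csum]|].
  replace (Z.to_nat q) with (S (Z.to_nat q - 1)) at 1 by lia.
  rewrite rsum_first, Cmod_mult. replace (- (b * Z.of_nat 0))%Z with 0%Z by lia.
  rewrite quad_sum_0, Cmod_0, Rmult_0_r, Rplus_0_l by assumption.
  eapply Rle_trans.
  { apply Rmult_le_compat_l; [lra|].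
    apply (rsum_le _ _ (fun t => sqrt (IZR q) * / sin (PI * INR (S t) / INR (Z.to_nat q)))).
    intros t Ht.
    assert (Hc : ~ (q | - (b * Z.of_nat (S t)))%Z).
    { rewrite Z.divide_opp_r. apply prime_ndiv_mul; [assumption..|]. apply ndiv_of_lt. lia. }
    rewrite Cmod_mult, Cmod_quad_sum, Rmult_comm by assumption.
    apply Rmult_le_compat_l; [apply sqrt_pos|]. rewrite HqR, INR_IZR_INZ.
    apply Cmod_geom_sum_le; lia. }
  rewrite <- rsum_scal, <- Rmult_assoc.
  eapply Rle_trans; [apply Rmult_le_compat_l; [|apply rsum_inv_sin_le; lia]|].
  - apply Rmult_le_pos; [lra | apply sqrt_pos].
  - rewrite HqR. right. field. lra.
Qed.

Lemma Cmod_S_sum_le_trivial q W a h :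
  (0 < q)%Z -> Cmod (S_sum q W a h) <= INR (Z.to_nat W) * IZR q.
Proof.
  intros Hq0. rewrite S_sum_as_csum. eapply Rle_trans; [apply Cmod_csum|].
  rewrite <- rsum_const. apply rsum_le. intros j _. unfold sum_Fq.
  eapply Rle_trans; [apply Cmod_csum|].
  replace (IZR q) with (INR (Z.to_nat q) * 1) by (rewrite Rmult_1_r, INR_IZR_INZ; f_equal; lia).
  rewrite <- rsum_const. apply rsum_le. intros x _.
  destruct (_ =? _)%Z; [rewrite Cmod_eq_char by exact Hq0 | rewrite Cmod_0]; lra.
Qed.

Lemma prime_ndiv_of_gcd_mul q a h :
  prime q -> Z.gcd (a * h) q = 1%Z -> ~ (q | a)%Z /\ ~ (q | h)%Z.
Proof.
  intros Hq Hg. pose proof (prime_ge_2 q Hq).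
  assert (Hndiv : ~ (q | a * h)%Z).
  { intros Hd. apply (ndiv_of_lt q 1); [lia|]. rewrite <- Hg.
    apply Z.gcd_greatest; [assumption | apply Z.divide_refl]. }
  split; intros Hd; apply Hndiv; [apply Z.divide_mul_l | apply Z.divide_mul_r]; assumption.
Qed.

Lemma inverse_mod_prime q a : prime q -> ~ (q | a)%Z -> exists b, (q | a * b - 1)%Z.
Proof.
  intros Hq Ha. destruct (rel_prime_bezout _ _ (prime_rel_prime q Hq a Ha)) as [u v Huv].
  exists v, (- u)%Z. lia.
Qed.

Lemma Cmod_S_sum_le q W a h : prime q -> (W <= q)%Z -> Z.gcd (a * h) q = 1%Z ->
  Cmod (S_sum q W a h) <= 4 * sqrt (IZR q) * (1 + ln (IZR q)).
Proof.
  intros Hq HW Hg. pose proof (prime_ge_2 q Hq).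
  assert (Hlog : 0 <= ln (IZR q)) by (rewrite <- ln_1; apply ln_le; [lra | apply IZR_le; lia]).
  assert (Hsqrt : 1 <= sqrt (IZR q)) by (rewrite <- sqrt_1; apply sqrt_le_1_alt, IZR_le; lia).
  destruct (Z.eq_dec q 2) as [->|Hq2].
  - eapply Rle_trans; [apply Cmod_S_sum_le_trivial; lia|].
    assert (INR (Z.to_nat W) <= 2) by (rewrite INR_IZR_INZ; apply IZR_le; lia).
    nra.
  - destruct (prime_ndiv_of_gcd_mul q a h Hq Hg) as [Ha Hh].
    destruct (inverse_mod_prime q a Hq Ha) as [b Hab].
    eapply Rle_trans; [apply (Cmod_S_sum_le_odd q W a h b); assumption|].
    nra.
Qed.

Theorem lemma3p2 :
  forall eps : R, 0 < eps ->
  exists K : R, 0 < K /\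
  forall q W a h : Z,
    prime q -> (W <= q)%Z -> Z.gcd (a * h) q = 1%Z ->
    Cmod (S_sum q W a h) <= K * Rpower (IZR q) (1/2 + eps).
Proof.
  intros eps Heps. exists (4 * (1 + / eps)). split.
  { assert (0 < / eps) by (apply Rinv_0_lt_compat; lra). lra. }
  intros q W a h Hq HW Hg.
  assert (Hq1 : 1 <= IZR q) by (apply IZR_le; pose proof (prime_ge_2 q Hq); lia).
  eapply Rle_trans; [apply Cmod_S_sum_le; assumption|].
  rewrite !Rmult_assoc. apply Rmult_le_compat_l; [lra|].
  now apply sqrt_mul_log_le_Rpower.
Qed.
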